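(* (IG quadrature.) Let $\gamma>0$, $\delta>0$, $\sigma=\sqrt{\gamma\delta}$, $n\ge1$, and let $\{z_k\}_{k=1}^n$ and $\{h_k\}_{k=1}^n$ be the points and weights of the $n$-point Gauss--Hermite quadrature with respect to the standard normal density. Define $$ x_k=\frac{\delta}{\gamma}\,\phi_\sigma^{-1}(z_k),\qquad w_k=\frac{2h_k}{1+\phi_\sigma^{-1}(z_k)}. $$ Then $\{x_k\}$, $\{w_k\}$ serve as a numerical quadrature with respect to the density $f_{\mathrm{IG}}(x\,|\,\gamma,\delta)$ on $(0,\infty)$, and it is exact for moments of integer order $r$ with $1-n\le r\le n$: if $X\sim\mathrm{IG}(\gamma,\delta)$, then $\mathbb{E}(X^r)=\sum_{k=1}^n x_k^r\,w_k$ for every integer $r\in\{1-n,\dots,n\}$.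
   Context: The inverse Gaussian distribution $\mathrm{IG}(\gamma,\delta)$ has density $f_{\mathrm{IG}}(x\,|\,\gamma,\delta)=\frac{\delta}{\sqrt{2\pi x^3}}\exp\left(-\frac{(\gamma x-\delta)^2}{2x}\right)$ for $x>0$. The Gauss--Hermite quadrature here is with respect to $n(z)=e^{-z^2/2}/\sqrt{2\pi}$: $z_k$ are the roots of the probabilists' Hermite polynomial $He_n$ and the weights $h_k$ satisfy $\sum_k h_k q(z_k)=\int q(z)n(z)\,dz$ for all polynomials $q$ of degree at most $2n-1$. For $\sigma>0$, $\phi_\sigma^{-1}(z)=1+\frac{z^2}{2\sigma^2}+\frac{z}{\sigma}\sqrt{1+\frac{z^2}{4\sigma^2}}$ is the inverse of $\phi_\sigma(x)=\sigma\left(\sqrt{x}-\frac{1}{\sqrt{x}}\right)$, $x>0$. *)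

From Stdlib Require Import Reals Lra ZArith.
From Coquelicot Require Import Coquelicot.
Open Scope R_scope.

Fixpoint fsum (n : nat) (f : nat -> R) : R :=
  match n with
  | O => 0
  | S m => fsum m f + f m
  end.

Fixpoint He (n : nat) (x : R) : R :=
  match n with
  | O => 1
  | S m =>
      match m with
      | O => x
      | S p => x * He m x - INR m * He p x
      end
  end.

Definition ndens (z : R) : R := exp (- z ^ 2 / 2) / sqrt (2 * PI).

Definition f_IG (gamma delta x : R) : R :=
  delta / sqrt (2 * PI * x ^ 3) * exp (- (gamma * x - delta) ^ 2 / (2 * x)).

Definition phi_inv (sigma z : R) : R :=
  1 + z ^ 2 / (2 * sigma ^ 2) + z / sigma * sqrt (1 + z ^ 2 / (4 * sigma ^ 2)).

(* (z_k)_{k<n}, (h_k)_{k<n} are the n-point Gauss-Hermite nodes and weights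
   w.r.t. the standard normal density: the z_k are the n distinct roots of He_n,
   and sum_k h_k q(z_k) = int_R q(z) n(z) dz for every polynomial q of degree
   <= 2n-1 (q given by its coefficients c_0, ..., c_{2n-1}). *)
Definition gauss_hermite (n : nat) (z h : nat -> R) : Prop :=
  (forall k, (k < n)%nat -> He n (z k) = 0) /\
  (forall i j, (i < n)%nat -> (j < n)%nat -> z i = z j -> i = j) /\
  (forall c : nat -> R,
     is_RInt_gen
       (fun t => fsum (2 * n) (fun j => c j * t ^ j) * ndens t)
       (Rbar_locally m_infty) (Rbar_locally p_infty)
       (fsum n (fun k => h k * fsum (2 * n) (fun j => c j * z k ^ j)))).

From Stdlib Require Import Reals ZArith Lra Lia.
From Coquelicot Require Import Coquelicot.
Open Scope R_scope.

(* The substitution x = (delta/gamma) phi_sigma^{-1}(z) turns the moment integral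
   int_0^oo x^r f_IG(x) dx into int_R F(z) n(z) dz with
   F(z) = x(z)^r * 2 / (1 + phi_sigma^{-1}(z)), so that x_k^r w_k = h_k F(z_k).
   Since phi_sigma^{-1}(-z) = 1 / phi_sigma^{-1}(z), the even part of F is (delta/gamma)^r
   times a polynomial in z of degree 2k - 2 <= 2n - 2, where k = r or k = 1 - r.  The
   Hermite nodes are symmetric, so the quadrature only sees the even part of F, and it
   integrates that polynomial exactly.  The improper integral of F n converges because
   F n >= 0 and its even part is integrable. *)

(** * Polynomials *)

Lemma fsum_ext n f g : (forall k, (k < n)%nat -> f k = g k) -> fsum n f = fsum n g.
Proof.
  induction n as [|n IH]; intros Hfg; simpl; [reflexivity|].
  rewrite IH, Hfg; auto; intros; apply Hfg; lia.
Qed.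

Lemma fsum_add n f g : fsum n (fun k => f k + g k) = fsum n f + fsum n g.
Proof. induction n as [|n IH]; simpl; [ring|rewrite IH; ring]. Qed.

Lemma fsum_scal n a f : fsum n (fun k => a * f k) = a * fsum n f.
Proof. induction n as [|n IH]; simpl; [ring|rewrite IH; ring]. Qed.

Lemma fsum_sub n f g : fsum n (fun k => f k - g k) = fsum n f - fsum n g.
Proof. induction n as [|n IH]; simpl; [ring|rewrite IH; ring]. Qed.

Lemma fsum_Sl n f : fsum (S n) f = f 0%nat + fsum n (fun j => f (S j)).
Proof. induction n as [|n IH]; simpl in *; [ring|rewrite IH; ring]. Qed.

(* [d] counts coefficients: [is_poly d f] means that [f] has degree [< d]. *)
Definition is_poly (d : nat) (f : R -> R) : Prop :=
  exists c : nat -> R, forall t, f t = fsum d (fun j => c j * t ^ j).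

Lemma is_poly_ext d f g : (forall t, f t = g t) -> is_poly d f -> is_poly d g.
Proof. intros Hfg [c Hc]; exists c; intros t; rewrite <- Hfg; auto. Qed.

Lemma is_poly_0 d : is_poly d (fun _ => 0).
Proof.
  exists (fun _ => 0); intros t.
  induction d as [|d IH]; simpl; [reflexivity|rewrite <- IH; ring].
Qed.

Lemma is_poly_const a : is_poly 1 (fun _ => a).
Proof. exists (fun _ => a); intros t; simpl; ring. Qed.

Lemma is_poly_S d f : is_poly d f -> is_poly (S d) f.
Proof.
  intros [c Hc]. exists (fun j => if Nat.ltb j d then c j else 0).
  intros t; simpl; rewrite Nat.ltb_irrefl, Hc, Rmult_0_l, Rplus_0_r.
  apply fsum_ext; intros k Hk; apply Nat.ltb_lt in Hk; rewrite Hk; reflexivity.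
Qed.

Lemma is_poly_le d d' f : (d <= d')%nat -> is_poly d f -> is_poly d' f.
Proof. induction 1; auto using is_poly_S. Qed.

Lemma is_poly_add d f g : is_poly d f -> is_poly d g -> is_poly d (fun t => f t + g t).
Proof.
  intros [c Hc] [e He]. exists (fun j => c j + e j); intros t.
  rewrite Hc, He, <- fsum_add; apply fsum_ext; intros; ring.
Qed.

Lemma is_poly_scal d a f : is_poly d f -> is_poly d (fun t => a * f t).
Proof.
  intros [c Hc]. exists (fun j => a * c j); intros t.
  rewrite Hc, <- fsum_scal; apply fsum_ext; intros; ring.
Qed.

Lemma is_poly_sub d f g : is_poly d f -> is_poly d g -> is_poly d (fun t => f t - g t).
Proof.
  intros Hf Hg. apply (is_poly_ext _ (fun t => f t + (-1) * g t)); [intros; ring|].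
  apply is_poly_add, is_poly_scal; assumption.
Qed.

Lemma is_poly_mulX d f : is_poly d f -> is_poly (S d) (fun t => t * f t).
Proof.
  intros [c Hc]. exists (fun j => match j with O => 0 | S j' => c j' end).
  intros t; rewrite fsum_Sl, Hc, <- fsum_scal; simpl.
  rewrite Rmult_0_l, Rplus_0_l; apply fsum_ext; intros; ring.
Qed.

Lemma is_poly_pow m : is_poly (S m) (fun t => t ^ m).
Proof.
  induction m as [|m IH]; [exact (is_poly_const 1)|].
  exact (is_poly_mulX _ _ IH).
Qed.

Lemma is_poly_fsum m d F : (forall j, (j < m)%nat -> is_poly d (F j)) ->
  is_poly d (fun t => fsum m (fun j => F j t)).
Proof.
  induction m as [|m IH]; intros HF; simpl; [apply is_poly_0|].
  apply is_poly_add; [apply IH; intros j Hj|]; apply HF; lia.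
Qed.

Lemma is_poly_comp_opp d f : is_poly d f -> is_poly d (fun t => f (- t)).
Proof.
  intros [c Hc]. exists (fun j => c j * (-1) ^ j); intros t.
  rewrite Hc; apply fsum_ext; intros.
  replace (- t) with ((-1) * t) by ring; rewrite Rpow_mult_distr; ring.
Qed.

Fixpoint pow_sub_quot (j : nat) (a t : R) : R :=
  match j with O => 0 | S j' => t * pow_sub_quot j' a t + a ^ j' end.

Lemma pow_sub_factor j a t : t ^ j - a ^ j = (t - a) * pow_sub_quot j a t.
Proof.
  induction j as [|j IH]; simpl; [ring|].
  replace (t * t ^ j - a * a ^ j) with (t * (t ^ j - a ^ j) + a ^ j * (t - a)) by ring.
  rewrite IH; ring.
Qed.

Lemma is_poly_pow_sub_quot j a : is_poly j (pow_sub_quot j a).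
Proof.
  induction j as [|j IH]; simpl; [apply is_poly_0|].
  apply is_poly_add; [exact (is_poly_mulX _ _ IH)|].
  apply (is_poly_le 1); [lia|apply is_poly_const].
Qed.

Lemma is_poly_factor m f a : is_poly (S m) f -> f a = 0 ->
  exists g, is_poly m g /\ forall t, f t = (t - a) * g t.
Proof.
  intros [c Hc] Hfa.
  exists (fun t => fsum (S m) (fun j => c j * pow_sub_quot j a t)); split.
  - apply is_poly_fsum; intros j Hj; apply is_poly_scal.
    apply (is_poly_le j); [lia|apply is_poly_pow_sub_quot].
  - intros t. replace (f t) with (f t - f a) by (rewrite Hfa; ring).
    rewrite !Hc, <- fsum_sub, <- fsum_scal; apply fsum_ext; intros.
    rewrite <- Rmult_minus_distr_l, pow_sub_factor; ring.
Qed.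

Lemma is_poly_eq0 m f p : is_poly m f -> (forall i, (i < m)%nat -> f (p i) = 0) ->
  (forall i j, (i < m)%nat -> (j < m)%nat -> p i = p j -> i = j) -> forall t, f t = 0.
Proof.
  revert f; induction m as [|m IH]; intros f Hf Hroot Hinj t.
  - destruct Hf as [c Hc]; exact (Hc t).
  - destruct (is_poly_factor m f (p m) Hf (Hroot m (Nat.lt_succ_diag_r m)))
      as [g [Hg Hfg]].
    rewrite Hfg, (IH g Hg); [ring| |intros i j Hi Hj; apply Hinj; lia].
    intros i Hi. specialize (Hroot i ltac:(lia)); rewrite Hfg in Hroot.
    destruct (Rmult_integral _ _ Hroot) as [Hpi|]; [|assumption].
    assert (i = m) by (apply Hinj; [lia|lia|lra]). lia.
Qed.

Fixpoint node_poly (z : nat -> R) (m : nat) (t : R) : R :=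
  match m with O => 1 | S m' => (t - z m') * node_poly z m' t end.

Lemma is_poly_node_poly z m : is_poly (S m) (node_poly z m).
Proof.
  induction m as [|m IH]; simpl; [apply is_poly_const|].
  apply (is_poly_ext _ (fun t => t * node_poly z m t + (- z m) * node_poly z m t));
    [intros; ring|].
  apply is_poly_add; [exact (is_poly_mulX _ _ IH)|apply is_poly_S, is_poly_scal, IH].
Qed.

Lemma is_poly_node_poly_sub_pow z m : is_poly m (fun t => node_poly z m t - t ^ m).
Proof.
  induction m as [|m IH]; simpl.
  - apply (is_poly_ext _ (fun _ => 0)); [intros; ring|apply is_poly_0].
  - apply (is_poly_ext _
      (fun t => t * (node_poly z m t - t ^ m) + (- z m) * node_poly z m t));
      [intros; ring|].
    apply is_poly_add; [exact (is_poly_mulX _ _ IH)|].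
    apply is_poly_scal, is_poly_node_poly.
Qed.

Lemma node_poly_root z m i : (i < m)%nat -> node_poly z m (z i) = 0.
Proof.
  induction m as [|m IH]; intros Hi; [lia|simpl].
  destruct (Nat.eq_dec i m) as [->|]; [ring|rewrite IH by lia; ring].
Qed.

Lemma node_poly_eq0 z m t : node_poly z m t = 0 -> exists i, (i < m)%nat /\ t = z i.
Proof.
  induction m as [|m IH]; simpl; intros H0; [lra|].
  destruct (Rmult_integral _ _ H0) as [Hm|Hm].
  - exists m; split; [lia|lra].
  - destruct (IH Hm) as [i [Hi ->]]; exists i; split; [lia|reflexivity].
Qed.

Lemma is_poly_He_sub_pow m : is_poly m (fun t => He m t - t ^ m).
Proof.
  enough (is_poly m (fun t => He m t - t ^ m) /\
          is_poly (S m) (fun t => He (S m) t - t ^ S m)) by tauto.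
  induction m as [|m [IH1 IH2]].
  - split; apply (is_poly_ext _ (fun _ => 0)); try (intros; simpl; ring); apply is_poly_0.
  - split; [exact IH2|].
    apply (is_poly_ext _ (fun t => t * (He (S m) t - t ^ S m)
             + (- INR (S m)) * (He m t - t ^ m) + (- INR (S m)) * t ^ m));
      [intros; change (He (S (S m)) t) with (t * He (S m) t - INR (S m) * He m t);
       simpl; ring|].
    apply is_poly_add; [apply is_poly_add|]; [exact (is_poly_mulX _ _ IH2)| |];
      apply is_poly_scal; [apply (is_poly_le m)|apply (is_poly_le (S m))];
      auto using is_poly_pow.
Qed.

Lemma He_opp m t : He m (- t) = (-1) ^ m * He m t.
Proof.
  revert t.
  enough ((forall t, He m (- t) = (-1) ^ m * He m t) /\
          (forall t, He (S m) (- t) = (-1) ^ S m * He (S m) t)) by tauto.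
  induction m as [|m [IH1 IH2]]; [split; intros; simpl; ring|].
  split; [exact IH2|]; intros s.
  change (He (S (S m)) ?x) with (x * He (S m) x - INR (S m) * He m x).
  rewrite IH1, IH2; simpl; ring.
Qed.

Lemma poly_interpolation m z (G : R -> R) :
  (forall i j, (i < m)%nat -> (j < m)%nat -> z i = z j -> i = j) ->
  exists L, is_poly m L /\ forall i, (i < m)%nat -> L (z i) = G (z i).
Proof.
  induction m as [|m IH]; intros Hinj.
  - exists (fun _ => 0); split; [apply is_poly_0|intros; lia].
  - destruct IH as [L [HL HLz]]; [intros i j Hi Hj; apply Hinj; lia|].
    assert (Hzm : node_poly z m (z m) <> 0).
    { intros H0; destruct (node_poly_eq0 _ _ _ H0) as [i [Hi Hzi]].
      specialize (Hinj m i ltac:(lia) ltac:(lia) Hzi); lia. }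
    set (a := (G (z m) - L (z m)) / node_poly z m (z m)).
    exists (fun t => L t + a * node_poly z m t); split.
    + apply is_poly_add; [apply is_poly_S, HL|apply is_poly_scal, is_poly_node_poly].
    + intros i Hi; destruct (Nat.eq_dec i m) as [->|].
      * unfold a; field; exact Hzm.
      * rewrite node_poly_root, HLz by lia; ring.
Qed.

(** * Improper integrals *)

Lemma is_RInt_gen_transport {Fa Fb Ga Gb : (R -> Prop) -> Prop}
  {FGa : Filter Ga} {FGb : Filter Gb} (f g : R -> R) (ya yb : R * R -> R) (l : R) :
  filterlim ya (filter_prod Ga Gb) Fa -> filterlim yb (filter_prod Ga Gb) Fb ->
  filter_prod Ga Gb (fun ab => forall I,
    is_RInt f (ya ab) (yb ab) I -> is_RInt g (fst ab) (snd ab) I) ->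
  is_RInt_gen f Fa Fb l -> is_RInt_gen g Ga Gb l.
Proof.
  intros Hya Hyb Hfg Hf P HP; unfold filtermapi.
  generalize (filter_and _ _ Hfg (filterlimi_comp_2 ya yb (fun a b => is_RInt f a b)
                                   Hya Hyb Hf P HP)).
  apply filter_imp; intros ab [Hab [I [HI HPI]]]; exists I; auto.
Qed.

Lemma is_RInt_opp_swap (f : R -> R) a b I :
  is_RInt f (- b) (- a) I -> is_RInt (fun t => f (- t)) a b I.
Proof.
  intros Hf. apply is_RInt_swap, is_RInt_comp_opp, is_RInt_opp in Hf.
  rewrite opp_opp in Hf; apply (is_RInt_ext _ _ _ _ _ (fun t _ => opp_opp (f (- t))) Hf).
Qed.

Lemma is_RInt_gen_comp_opp (f : R -> R) (l : R) :
  is_RInt_gen f (Rbar_locally m_infty) (Rbar_locally p_infty) l ->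
  is_RInt_gen (fun t => f (- t)) (Rbar_locally m_infty) (Rbar_locally p_infty) l.
Proof.
  apply is_RInt_gen_transport with (ya := fun ab => - snd ab) (yb := fun ab => - fst ab).
  - eapply filterlim_comp; [apply filterlim_snd|apply (filterlim_Rbar_opp p_infty)].
  - eapply filterlim_comp; [apply filterlim_fst|apply (filterlim_Rbar_opp m_infty)].
  - apply filter_forall; intros ab I; apply is_RInt_opp_swap.
Qed.

Lemma nondecreasing_le_lim (f : R -> R) (l : R) :
  (forall x y, x <= y -> f x <= f y) ->
  filterlim f (Rbar_locally p_infty) (locally l) -> forall x, f x <= l.
Proof.
  intros Hmono Hlim x; apply Rnot_lt_le; intros Hlt.
  destruct (Hlim (fun y => y < f x) (open_lt _ _ Hlt)) as [M HM].
  specialize (HM (Rmax M x + 1) ltac:(generalize (Rmax_l M x); lra)).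
  generalize (Hmono x (Rmax M x + 1) ltac:(generalize (Rmax_r M x); lra)); lra.
Qed.

Lemma nondecreasing_bounded_cvg (f : R -> R) (M : R) :
  (forall x y, x <= y -> f x <= f y) -> (forall x, f x <= M) ->
  exists l, filterlim f (Rbar_locally p_infty) (locally l).
Proof.
  intros Hmono Hbound.
  destruct (completeness (fun v => exists x, v = f x)) as [l [Hub Hlub]].
  { exists M; intros v [x ->]; apply Hbound. }
  { exists (f 0), 0; reflexivity. }
  exists l; apply filterlim_locally; intros eps.
  assert (Hx0 : exists x0, l - eps < f x0).
  { apply Classical_Pred_Type.not_all_not_ex; intros Hnot.
    enough (l <= l - eps) by (generalize (cond_pos eps); lra).
    apply Hlub; intros v [x ->]; apply Rnot_lt_le, Hnot. }
  destruct Hx0 as [x0 Hx0]; exists x0; intros x Hx.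
  assert (f x <= l) by (apply Hub; exists x; reflexivity).
  generalize (Hmono x0 x (Rlt_le _ _ Hx)); intros.
  change (Rabs (f x - l) < eps); apply Rabs_def1; lra.
Qed.

Section EvenPart.

Variables (G E : R -> R) (J : R).
Hypothesis G_integrable : forall a b, ex_RInt G a b.
Hypothesis G_ge0 : forall t, 0 <= G t.
Hypothesis G_even_part : forall t, G t + G (- t) = 2 * E t.
Hypothesis E_integral : is_RInt_gen E (Rbar_locally m_infty) (Rbar_locally p_infty) J.

Lemma RInt_G_Chasles a b c : RInt G a b + RInt G b c = RInt G a c.
Proof. apply (RInt_Chasles (V := R_CompleteNormedModule)); apply G_integrable. Qed.

Lemma RInt_G_ge0 a b : a <= b -> 0 <= RInt G a b.
Proof. intros Hab; apply RInt_ge_0; auto. Qed.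

Lemma RInt_G_le_r a b b' : b <= b' -> RInt G a b <= RInt G a b'.
Proof. intros; rewrite <- (RInt_G_Chasles a b b'); generalize (RInt_G_ge0 b b'); lra. Qed.

Lemma RInt_G_le_l a a' b : a' <= a -> RInt G a b <= RInt G a' b.
Proof. intros; rewrite <- (RInt_G_Chasles a' a b); generalize (RInt_G_ge0 a' a); lra. Qed.

Lemma is_RInt_even_part b : is_RInt E (- b) b (RInt G (- b) b).
Proof.
  set (T := RInt G (- b) b : R).
  assert (HG : is_RInt G (- b) b T)
    by apply (RInt_correct (V := R_CompleteNormedModule)), G_integrable.
  assert (HGopp : is_RInt (fun t => G (- t)) (- b) b T)
    by (apply is_RInt_opp_swap; rewrite Ropp_involutive; exact HG).
  apply (is_RInt_ext (V := R_NormedModule) (fun t => / 2 * (G t + G (- t))));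
    [intros t _; change (/ 2 * (G t + G (- t)) = E t :> R); rewrite G_even_part; field|].
  replace T with (/ 2 * (T + T)) by field.
  apply (is_RInt_scal (V := R_NormedModule)), (is_RInt_plus (V := R_NormedModule));
    assumption.
Qed.

Lemma RInt_sym_cvg : filterlim (fun b => RInt G (- b) b) (Rbar_locally p_infty) (locally J).
Proof.
  intros P HP.
  generalize (filterlimi_comp_2 Ropp (fun b => b) (fun a b => is_RInt E a b)
                (filterlim_Rbar_opp p_infty) (filterlim_id _ _) E_integral P HP).
  unfold filtermapi, filtermap; apply filter_imp; intros b [y [Hy HPy]].
  replace (RInt G (- b) b) with y; [exact HPy|].
  rewrite <- (is_RInt_unique _ _ _ _ Hy); apply is_RInt_unique, is_RInt_even_part.
Qed.

Lemma RInt_sym_le b : RInt G (- b) b <= J.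
Proof.
  revert b; apply nondecreasing_le_lim; [|exact RInt_sym_cvg].
  intros x y Hxy; eapply Rle_trans; [apply RInt_G_le_l|apply RInt_G_le_r]; lra.
Qed.

Lemma RInt_G_half_le b : RInt G 0 b <= J /\ RInt G (- b) 0 <= J.
Proof.
  set (m := Rmax b 0).
  assert (Hm : 0 <= m /\ b <= m) by (split; [apply Rmax_r|apply Rmax_l]).
  generalize (RInt_sym_le m) (RInt_G_Chasles (- m) 0 m) (RInt_G_ge0 0 m)
    (RInt_G_ge0 (- m) 0 ltac:(lra)) (RInt_G_le_r 0 b m) (RInt_G_le_l (- b) (- m) 0).
  lra.
Qed.

Lemma is_RInt_gen_of_half_limits LA LB :
  filterlim (fun b => RInt G 0 b) (Rbar_locally p_infty) (locally LA) ->
  filterlim (fun b => RInt G (- b) 0) (Rbar_locally p_infty) (locally LB) ->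
  is_RInt_gen G (Rbar_locally m_infty) (Rbar_locally p_infty) (LB + LA).
Proof.
  intros HA HB.
  apply (filterlimi_lim_ext (fun ab => RInt G (fst ab) (snd ab)));
    [intros ab; apply (RInt_correct (V := R_CompleteNormedModule)), G_integrable|].
  apply (filterlim_ext (fun ab => RInt G (- - fst ab) 0 + RInt G 0 (snd ab)));
    [intros ab; rewrite Ropp_involutive; apply RInt_G_Chasles|].
  apply (filterlim_comp_2 (G := locally LB) (H := locally LA)
           (fun ab => RInt G (- - fst ab) 0) (fun ab => RInt G 0 (snd ab)) Rplus);
    [| |apply (filterlim_plus (V := R_NormedModule) LB LA)].
  - apply (filterlim_comp _ _ _ (fun ab => - fst ab) (fun b => RInt G (- b) 0) _
             (Rbar_locally p_infty)); [|exact HB].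
    eapply filterlim_comp; [apply filterlim_fst|apply (filterlim_Rbar_opp m_infty)].
  - exact (filterlim_comp _ _ _ snd _ _ _ _ filterlim_snd HA).
Qed.

(* Both halves are nondecreasing and bounded by [J], hence converge; their sum is the
   symmetric integral, which tends to [J]. *)
Theorem is_RInt_gen_of_even_part :
  is_RInt_gen G (Rbar_locally m_infty) (Rbar_locally p_infty) J.
Proof.
  destruct (nondecreasing_bounded_cvg (fun b => RInt G 0 b) J) as [LA HA];
    [intros; apply RInt_G_le_r; lra|apply RInt_G_half_le|].
  destruct (nondecreasing_bounded_cvg (fun b => RInt G (- b) 0) J) as [LB HB];
    [intros; apply RInt_G_le_l; lra|apply RInt_G_half_le|].
  replace J with (LB + LA); [exact (is_RInt_gen_of_half_limits LA LB HA HB)|].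
  apply (filterlim_locally_unique (V := R_NormedModule) (F := Rbar_locally p_infty)
           (fun b => RInt G (- b) b)); [|exact RInt_sym_cvg].
  apply (filterlim_ext (fun b => RInt G (- b) 0 + RInt G 0 b));
    [intros; apply RInt_G_Chasles|].
  apply (filterlim_comp_2 (fun b => RInt G (- b) 0) (fun b => RInt G 0 b) Rplus HB HA).
  apply (filterlim_plus (V := R_NormedModule) LB LA).
Qed.

End EvenPart.

(** * Gauss-Hermite quadrature *)

Lemma ndens_opp t : ndens (- t) = ndens t.
Proof. unfold ndens; replace ((- t) ^ 2) with (t ^ 2) by ring; reflexivity. Qed.

Lemma ndens_pos t : 0 < ndens t.
Proof.
  apply Rdiv_lt_0_compat; [apply exp_pos|apply sqrt_lt_R0].
  generalize PI_RGT_0; lra.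
Qed.

Section GaussHermite.

Variables (n : nat) (z h : nat -> R).
Hypothesis Hgh : gauss_hermite n z h.

Lemma gauss_hermite_exact f : is_poly (2 * n) f ->
  is_RInt_gen (fun t => f t * ndens t) (Rbar_locally m_infty) (Rbar_locally p_infty)
    (fsum n (fun k => h k * f (z k))).
Proof.
  destruct Hgh as [_ [_ Hexact]]; intros [c Hc].
  rewrite (fsum_ext _ _ (fun k => h k * fsum (2 * n) (fun j => c j * z k ^ j)))
    by (intros; rewrite Hc; reflexivity).
  apply (is_RInt_gen_ext (fun t => fsum (2 * n) (fun j => c j * t ^ j) * ndens t));
    [|apply Hexact].
  apply filter_forall; intros ab t _; rewrite Hc; reflexivity.
Qed.

Lemma He_eq_node_poly t : He n t = node_poly z n t.
Proof.
  destruct Hgh as [Hroot [Hinj _]].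
  apply Rminus_diag_uniq; revert t; apply (is_poly_eq0 n _ z); [| |exact Hinj].
  - apply (is_poly_ext _ (fun t => (He n t - t ^ n) - (node_poly z n t - t ^ n)));
      [intros; ring|].
    apply is_poly_sub; [apply is_poly_He_sub_pow|apply is_poly_node_poly_sub_pow].
  - intros i Hi; rewrite Hroot, node_poly_root by exact Hi; ring.
Qed.

(* He_n has parity n, so its roots come in pairs [z, -z]. *)
Lemma gauss_hermite_node_opp k : (k < n)%nat -> exists j, (j < n)%nat /\ z j = - z k.
Proof.
  intros Hk. destruct Hgh as [Hroot _].
  assert (H0 : node_poly z n (- z k) = 0)
    by (rewrite <- He_eq_node_poly, He_opp, Hroot by exact Hk; ring).
  destruct (node_poly_eq0 _ _ _ H0) as [j [Hj Hzj]]; exists j; auto.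
Qed.

(* Replace [G] by its interpolating polynomial [L] on the nodes: for [L] the identity is the
   reflection invariance of the exact integral, and each [-z_k] is again a node. *)
Lemma gauss_hermite_sum_opp G :
  fsum n (fun k => h k * G (z k)) = fsum n (fun k => h k * G (- z k)).
Proof.
  pose proof Hgh as [_ [Hinj _]].
  destruct (poly_interpolation n z G Hinj) as [L [HL HLz]].
  assert (HL2 : is_poly (2 * n) L) by (apply (is_poly_le n); [lia|exact HL]).
  pose proof (is_RInt_gen_comp_opp _ _ (gauss_hermite_exact L HL2)) as Hopp.
  pose proof (gauss_hermite_exact _ (is_poly_comp_opp _ _ HL2)) as Hopp'.
  apply (is_RInt_gen_ext _ (fun t => L (- t) * ndens t)) in Hopp;
    [|apply filter_forall; intros ab t _; rewrite ndens_opp; reflexivity].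
  transitivity (fsum n (fun k => h k * L (z k)));
    [apply fsum_ext; intros; rewrite HLz; auto|].
  rewrite <- (is_RInt_gen_unique _ _ Hopp), (is_RInt_gen_unique _ _ Hopp').
  apply fsum_ext; intros k Hk; cbv beta.
  destruct (gauss_hermite_node_opp k Hk) as [j [Hj <-]]; rewrite HLz; auto.
Qed.

End GaussHermite.

(** * The map phi_sigma and its inverse *)

Definition phi (s x : R) : R := s * (sqrt x - / sqrt x).

Definition phi_rad (s z : R) : R := sqrt (1 + z ^ 2 / (4 * s ^ 2)).

Section Phi.

Variable s : R.
Hypothesis s_gt0 : 0 < s.

Lemma phi_rad_arg_pos z : 0 < 1 + z ^ 2 / (4 * s ^ 2).
Proof.
  replace (z ^ 2 / (4 * s ^ 2)) with ((z / (2 * s)) ^ 2) by (field; lra).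
  generalize (pow2_ge_0 (z / (2 * s))); lra.
Qed.

Lemma phi_rad_sqr z : phi_rad s z ^ 2 = 1 + (z / (2 * s)) ^ 2.
Proof.
  unfold phi_rad; rewrite pow2_sqrt by (apply Rlt_le, phi_rad_arg_pos); field; lra.
Qed.

Lemma phi_rad_pos z : 0 < phi_rad s z.
Proof. apply sqrt_lt_R0, phi_rad_arg_pos. Qed.

Lemma phi_root_pos z : 0 < z / (2 * s) + phi_rad s z.
Proof. generalize (phi_rad_sqr z) (phi_rad_pos z); nra. Qed.

Lemma phi_inv_eq_sqr z : phi_inv s z = (z / (2 * s) + phi_rad s z) ^ 2.
Proof.
  replace ((z / (2 * s) + phi_rad s z) ^ 2)
    with ((z / (2 * s)) ^ 2 + 2 * (z / (2 * s)) * phi_rad s z + phi_rad s z ^ 2) by ring.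
  rewrite phi_rad_sqr; unfold phi_inv, phi_rad; field; lra.
Qed.

Lemma phi_inv_pos z : 0 < phi_inv s z.
Proof. rewrite phi_inv_eq_sqr; generalize (phi_root_pos z); nra. Qed.

Lemma phi_inv_opp_mul z : phi_inv s (- z) * phi_inv s z = 1.
Proof.
  rewrite !phi_inv_eq_sqr.
  replace (phi_rad s (- z)) with (phi_rad s z)
    by (unfold phi_rad; replace ((- z) ^ 2) with (z ^ 2) by ring; reflexivity).
  replace (- z / (2 * s)) with (- (z / (2 * s))) by (field; lra).
  replace ((- (z / (2 * s)) + phi_rad s z) ^ 2 * (z / (2 * s) + phi_rad s z) ^ 2)
    with ((phi_rad s z ^ 2 - (z / (2 * s)) ^ 2) ^ 2) by ring.
  rewrite phi_rad_sqr; ring.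
Qed.

Lemma phi_inv_sub1_sqr z : (phi_inv s z - 1) ^ 2 = z ^ 2 / s ^ 2 * phi_inv s z.
Proof.
  rewrite !phi_inv_eq_sqr.
  replace (z ^ 2 / s ^ 2) with (4 * (z / (2 * s)) ^ 2) by (field; lra).
  replace ((z / (2 * s) + phi_rad s z) ^ 2 - 1)
    with ((z / (2 * s)) ^ 2 + 2 * (z / (2 * s)) * phi_rad s z + (phi_rad s z ^ 2 - 1))
    by ring.
  rewrite phi_rad_sqr; ring.
Qed.

Lemma is_derive_phi_inv z : is_derive (phi_inv s) z (phi_inv s z / (s * phi_rad s z)).
Proof.
  assert (Hz2 : z ^ 2 / (4 * s ^ 2) = z * (z * 1) * / (4 * (s * (s * 1))))
    by (field; lra).
  pose proof (phi_rad_pos z) as Hq0; pose proof (phi_rad_sqr z) as Hq2.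
  unfold phi_inv; auto_derive.
  - rewrite <- Hz2; apply phi_rad_arg_pos.
  - rewrite <- Hz2; fold (phi_rad s z); set (q := phi_rad s z) in *.
    apply Rmult_eq_reg_r with (4 * s ^ 3 * q);
      [|generalize (pow_lt s 3 s_gt0); intros; apply Rgt_not_eq, Rmult_lt_0_compat; lra].
    match goal with |- ?A * ?M = ?B * ?M =>
      replace (A * M) with (4 * s * z * q + 4 * s ^ 2 * q ^ 2 + z ^ 2) by (field; lra);
      replace (B * M) with (4 * s ^ 2 + 2 * z ^ 2 + 4 * s * z * q) by (field; lra) end.
    rewrite Hq2; field; lra.
Qed.

Lemma phi_phi_inv z : phi s (phi_inv s z) = z.
Proof.
  unfold phi; rewrite phi_inv_eq_sqr, sqrt_pow2 by apply Rlt_le, phi_root_pos.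
  pose proof (phi_rad_sqr z) as Hq2; pose proof (phi_root_pos z) as Hp.
  set (b := z / (2 * s)) in *; set (q := phi_rad s z) in *.
  replace (/ (b + q)) with (q - b) by (field_simplify_eq; [nra|lra]).
  unfold b; field; lra.
Qed.

Lemma phi_inv_phi x : 0 < x -> phi_inv s (phi s x) = x.
Proof.
  intros Hx; pose proof (sqrt_lt_R0 _ Hx) as Hp.
  pose proof (pow2_sqrt _ (Rlt_le _ _ Hx)) as Hp2.
  unfold phi; set (p := sqrt x) in *.
  assert (Hq : phi_rad s (s * (p - / p)) = (p + / p) / 2).
  { unfold phi_rad.
    replace (1 + (s * (p - / p)) ^ 2 / (4 * s ^ 2)) with (((p + / p) / 2) ^ 2)
      by (field; split; lra).
    apply sqrt_pow2; generalize (Rinv_0_lt_compat _ Hp); lra. }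
  rewrite phi_inv_eq_sqr, Hq.
  replace (s * (p - / p) / (2 * s) + (p + / p) / 2) with p by (field; split; lra).
  exact Hp2.
Qed.

Lemma phi_lt x x' : 0 < x -> x < x' -> phi s x < phi s x'.
Proof.
  intros Hx Hxx'; unfold phi.
  pose proof (sqrt_lt_R0 _ Hx) as Hp.
  assert (Hlt : sqrt x < sqrt x') by (apply sqrt_lt_1; lra).
  generalize (Rinv_lt_contravar _ _ (Rmult_lt_0_compat _ _ Hp (Rlt_trans _ _ _ Hp Hlt)) Hlt).
  intros; apply Rmult_lt_compat_l; lra.
Qed.

Lemma filterlim_phi_scaled_0 c : 0 < c ->
  filterlim (fun u => phi s (u / c)) (at_right 0) (Rbar_locally m_infty).
Proof.
  intros Hc P [M HM].
  assert (HcM : 0 < c * phi_inv s M) by (apply Rmult_lt_0_compat; [lra|apply phi_inv_pos]).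
  exists (mkposreal _ HcM); intros u Hu Hu0; apply HM.
  change (Rabs (u - 0) < c * phi_inv s M) in Hu; rewrite Rminus_0_r, Rabs_pos_eq in Hu by lra.
  rewrite <- (phi_phi_inv M); apply phi_lt; [apply Rdiv_lt_0_compat; lra|].
  apply Rmult_lt_reg_l with c; [lra|]; field_simplify; lra.
Qed.

Lemma filterlim_phi_scaled_p_infty c : 0 < c ->
  filterlim (fun u => phi s (u / c)) (Rbar_locally p_infty) (Rbar_locally p_infty).
Proof.
  intros Hc P [M HM].
  assert (HcM : 0 < c * phi_inv s M) by (apply Rmult_lt_0_compat; [lra|apply phi_inv_pos]).
  exists (c * phi_inv s M); intros u Hu; apply HM.
  rewrite <- (phi_phi_inv M); apply phi_lt; [apply phi_inv_pos|].
  apply Rmult_lt_reg_l with c; [lra|]; field_simplify; lra.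
Qed.

End Phi.

(** * The inverse Gaussian substitution *)

(* With [y = phi_inv s z] one has [y + 1/y = 2 + z^2/s^2], and [sym_poly s k z] is
   [(y^k + y^(1-k)) / (1 + y)], written as a polynomial in [z] (lemma [sym_poly_mul]). *)
Fixpoint sym_poly (s : R) (k : nat) (z : R) : R :=
  match k with
  | O => 1
  | S k' => match k' with
            | O => 1
            | S k'' => (2 + z ^ 2 / s ^ 2) * sym_poly s k' z - sym_poly s k'' z
            end
  end.

Lemma is_poly_sym_poly s k : is_poly (2 * k + 1) (sym_poly s (S k)).
Proof.
  enough (is_poly (2 * k + 1) (sym_poly s (S k)) /\
          is_poly (2 * S k + 1) (sym_poly s (S (S k)))) by tauto.
  induction k as [|k [IH1 IH2]].
  - split; [apply is_poly_const|].
    apply (is_poly_ext _ (fun z => 1 + / s ^ 2 * (z * (z * 1))));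
      [intros; simpl; unfold Rdiv; ring|].
    apply is_poly_add; [apply (is_poly_le 1); [lia|apply is_poly_const]|].
    apply is_poly_scal, is_poly_mulX, is_poly_mulX, (is_poly_le 1);
      [lia|apply is_poly_const].
  - split; [exact IH2|].
    apply (is_poly_ext _ (fun z => 2 * sym_poly s (S (S k)) z
             + / s ^ 2 * (z * (z * sym_poly s (S (S k)) z)) - sym_poly s (S k) z));
      [intros; simpl; unfold Rdiv; ring|].
    apply is_poly_sub; [apply is_poly_add|apply (is_poly_le (2 * k + 1)); [lia|exact IH1]].
    + apply is_poly_scal, (is_poly_le (2 * S k + 1)); [lia|exact IH2].
    + apply is_poly_scal; replace (2 * S (S k) + 1)%nat with (S (S (2 * S k + 1))) by lia.
      apply is_poly_mulX, is_poly_mulX, IH2.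
Qed.

Lemma sym_poly_mul s y z : y * (2 + z ^ 2 / s ^ 2) = y ^ 2 + 1 ->
  forall k, sym_poly s k z * (1 + y) * y ^ k = y ^ (2 * k) + y.
Proof.
  intros Hy k.
  enough (sym_poly s k z * (1 + y) * y ^ k = y ^ (2 * k) + y /\
          sym_poly s (S k) z * (1 + y) * y ^ S k = y ^ (2 * S k) + y) by tauto.
  induction k as [|k [IH1 IH2]]; [split; simpl; ring|split; [exact IH2|]].
  change (sym_poly s (S (S k)) z)
    with ((2 + z ^ 2 / s ^ 2) * sym_poly s (S k) z - sym_poly s k z).
  replace (((2 + z ^ 2 / s ^ 2) * sym_poly s (S k) z - sym_poly s k z) * (1 + y) * y ^ S (S k))
    with (y * (2 + z ^ 2 / s ^ 2) * (sym_poly s (S k) z * (1 + y) * y ^ S k)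
          - y ^ 2 * (sym_poly s k z * (1 + y) * y ^ k)) by (simpl; ring).
  rewrite Hy, IH1, IH2.
  replace (2 * S k)%nat with (S (S (2 * k))) by lia.
  replace (2 * S (S k))%nat with (S (S (S (S (2 * k))))) by lia.
  simpl; ring.
Qed.

Lemma exponent_cases (n : nat) (r : Z) : (1 - Z.of_nat n <= r <= Z.of_nat n)%Z ->
  exists k, (1 <= k <= n)%nat /\ (r = Z.of_nat k \/ r = 1 - Z.of_nat k)%Z.
Proof.
  intros Hr; destruct (Z_le_gt_dec 1 r).
  - exists (Z.to_nat r); split; [lia|left; lia].
  - exists (Z.to_nat (1 - r)); split; [lia|right; lia].
Qed.

Lemma powerRZ_add_inv y r k : 0 < y -> (r = Z.of_nat k \/ r = 1 - Z.of_nat k)%Z ->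
  powerRZ y r + y * powerRZ (/ y) r = (y ^ (2 * k) + y) / y ^ k.
Proof.
  intros Hy Hr.
  assert (Hyk : y ^ k <> 0) by (apply pow_nonzero; lra).
  replace (2 * k)%nat with (k + k)%nat by lia; rewrite pow_add.
  destruct Hr as [->| ->].
  - rewrite <- !pow_powerRZ, pow_inv; field; exact Hyk.
  - replace (1 - Z.of_nat k)%Z with (1 + - Z.of_nat k)%Z by lia.
    rewrite !powerRZ_add, !powerRZ_neg', <- !pow_powerRZ, pow_inv by
      (try apply Rinv_neq_0_compat; lra).
    simpl; field; split; [exact Hyk|lra].
Qed.

Section InverseGaussian.

Variables gamma delta : R.
Hypothesis gamma_gt0 : 0 < gamma.
Hypothesis delta_gt0 : 0 < delta.
Variable r : Z.

Definition ig_sigma : R := sqrt (gamma * delta).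

Definition ig_node (z : R) : R := delta / gamma * phi_inv ig_sigma z.

Definition ig_weight (z : R) : R := 2 / (1 + phi_inv ig_sigma z).

Definition ig_node_deriv (z : R) : R :=
  delta / gamma * (phi_inv ig_sigma z / (ig_sigma * phi_rad ig_sigma z)).

Definition ig_moment (t : R) : R := powerRZ t r * f_IG gamma delta t.

Definition ig_moment_pullback (z : R) : R := ig_node_deriv z * ig_moment (ig_node z).

Lemma ig_sigma_pos : 0 < ig_sigma.
Proof. apply sqrt_lt_R0; nra. Qed.

Lemma ig_sigma_sqr : ig_sigma ^ 2 = gamma * delta.
Proof. apply pow2_sqrt; nra. Qed.

Lemma ig_node_pos z : 0 < ig_node z.
Proof.
  apply Rmult_lt_0_compat; [apply Rdiv_lt_0_compat; lra|apply phi_inv_pos, ig_sigma_pos].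
Qed.

Lemma ig_node_phi u : 0 < u -> ig_node (phi ig_sigma (u / (delta / gamma))) = u.
Proof.
  intros Hu.
  assert (Hc : 0 < delta / gamma) by (apply Rdiv_lt_0_compat; lra).
  unfold ig_node; rewrite phi_inv_phi;
    [field; lra|apply ig_sigma_pos|apply Rdiv_lt_0_compat; lra].
Qed.

Lemma is_derive_ig_node z : is_derive ig_node z (ig_node_deriv z).
Proof. apply (is_derive_scal (phi_inv ig_sigma)), is_derive_phi_inv, ig_sigma_pos. Qed.

Lemma continuous_ig_node_deriv z : continuous ig_node_deriv z.
Proof.
  pose proof ig_sigma_pos as Hs.
  assert (Hz2 : z ^ 2 / (4 * ig_sigma ^ 2)
                = z * (z * 1) * / (4 * (ig_sigma * (ig_sigma * 1)))) by (field; lra).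
  apply (ex_derive_continuous (V := R_NormedModule)).
  unfold ig_node_deriv, phi_inv, phi_rad; auto_derive; rewrite <- Hz2.
  repeat split; try apply phi_rad_arg_pos; auto.
  apply Rgt_not_eq, Rmult_lt_0_compat; [exact Hs|apply phi_rad_pos, Hs].
Qed.

Lemma continuous_ig_moment t : 0 < t -> continuous ig_moment t.
Proof.
  intros Ht; pose proof PI_RGT_0 as Hpi.
  assert (Ht3 : 0 < 2 * PI * (t * (t * (t * 1)))) by
    (apply Rmult_lt_0_compat; [lra|apply (pow_lt t 3 Ht)]).
  apply (ex_derive_continuous (V := R_NormedModule)); unfold ig_moment, f_IG.
  destruct r; simpl powerRZ; auto_derive; repeat split;
    try (apply Rgt_not_eq, sqrt_lt_R0); try apply pow_nonzero; lra.
Qed.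

Lemma ig_moment_pullback_eq z :
  ig_moment_pullback z = powerRZ (ig_node z) r * ig_weight z * ndens z.
Proof.
  pose proof ig_sigma_pos as Hs; pose proof ig_sigma_sqr as Hs2.
  pose proof (phi_inv_pos _ Hs z) as Hy; pose proof (phi_inv_sub1_sqr _ Hs z) as Hquad.
  pose proof (phi_rad_pos _ Hs z) as Hq; pose proof (phi_rad_sqr _ Hs z) as Hq2.
  pose proof PI_RGT_0 as Hpi.
  assert (Hsp : 0 < sqrt (2 * PI)) by (apply sqrt_lt_R0; lra).
  assert (Hsp2 : sqrt (2 * PI) ^ 2 = 2 * PI) by (apply pow2_sqrt; lra).
  unfold ig_moment_pullback, ig_moment, f_IG, ig_weight, ndens, ig_node_deriv, ig_node.
  set (c := delta / gamma); set (y := phi_inv ig_sigma z) in *;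
    set (q := phi_rad ig_sigma z) in *.
  assert (Hc : 0 < c) by (apply Rdiv_lt_0_compat; lra).
  assert (Hq4 : 4 * q ^ 2 * y = (1 + y) ^ 2).
  { replace (4 * q ^ 2 * y) with (4 * y + z ^ 2 / ig_sigma ^ 2 * y)
      by (rewrite Hq2; field; lra).
    rewrite <- Hquad; ring. }
  assert (Hexp : - (gamma * (c * y) - delta) ^ 2 / (2 * (c * y)) = - z ^ 2 / 2).
  { replace ((gamma * (c * y) - delta) ^ 2) with (delta ^ 2 * (y - 1) ^ 2)
      by (unfold c; field; lra).
    rewrite Hquad; replace (z ^ 2 / ig_sigma ^ 2 * y) with (z ^ 2 * y / ig_sigma ^ 2)
      by (field; lra).
    rewrite Hs2; unfold c; field; repeat split; lra. }
  assert (Hsqrt : sqrt (2 * PI * (c * y) ^ 3)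
                  = delta * (c * (y / (ig_sigma * q))) * (1 + y) * sqrt (2 * PI) / 2).
  { assert (Hyq : 0 < y / (ig_sigma * q))
      by (apply Rdiv_lt_0_compat; [|apply Rmult_lt_0_compat]; lra).
    rewrite <- (sqrt_pow2 (delta * (c * (y / (ig_sigma * q))) * (1 + y) * sqrt (2 * PI) / 2))
      by (apply Rlt_le, Rdiv_lt_0_compat; [|lra];
          apply Rmult_lt_0_compat; [|exact Hsp]; apply Rmult_lt_0_compat; [|lra];
          apply Rmult_lt_0_compat; [|apply Rmult_lt_0_compat]; assumption).
    f_equal.
    replace ((delta * (c * (y / (ig_sigma * q))) * (1 + y) * sqrt (2 * PI) / 2) ^ 2)
      with (delta ^ 2 * c ^ 2 * y ^ 2 * (1 + y) ^ 2 * sqrt (2 * PI) ^ 2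
            / (4 * ig_sigma ^ 2 * q ^ 2)) by (field; lra).
    rewrite <- Hq4, Hsp2, Hs2; unfold c; field; repeat split; lra. }
  rewrite Hexp, Hsqrt; field; repeat split; lra.
Qed.

(* [phi_inv (-z) = 1 / phi_inv z], so the two halves of the sum combine to
   [(y^r + y^(1-r)) / (1 + y)], which is [sym_poly] for [r = k] as well as [r = 1 - k]. *)
Lemma ig_weight_even_part k : (r = Z.of_nat k \/ r = 1 - Z.of_nat k)%Z -> forall z,
  powerRZ (ig_node z) r * ig_weight z + powerRZ (ig_node (- z)) r * ig_weight (- z)
  = 2 * (powerRZ (delta / gamma) r * sym_poly ig_sigma k z).
Proof.
  intros Hk z; pose proof ig_sigma_pos as Hs.
  pose proof (phi_inv_pos _ Hs z) as Hy; pose proof (phi_inv_opp_mul _ Hs z) as Hopp.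
  pose proof (phi_inv_sub1_sqr _ Hs z) as Hquad.
  unfold ig_node, ig_weight; set (y := phi_inv ig_sigma z) in *.
  replace (phi_inv ig_sigma (- z)) with (/ y)
    by (apply (Rmult_eq_reg_r y); [rewrite Hopp; field|]; lra).
  rewrite !powerRZ_mult.
  assert (Hw : y * (2 + z ^ 2 / ig_sigma ^ 2) = y ^ 2 + 1)
    by (replace (y * (2 + z ^ 2 / ig_sigma ^ 2)) with (2 * y + z ^ 2 / ig_sigma ^ 2 * y)
          by ring; rewrite <- Hquad; ring).
  assert (Hsym : powerRZ y r + y * powerRZ (/ y) r = sym_poly ig_sigma k z * (1 + y)).
  { rewrite (powerRZ_add_inv y r k Hy Hk), <- (sym_poly_mul _ _ _ Hw k).
    field; apply pow_nonzero; lra. }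
  transitivity
    (2 * powerRZ (delta / gamma) r * (powerRZ y r + y * powerRZ (/ y) r) / (1 + y));
    [field; lra|rewrite Hsym; field; lra].
Qed.

Lemma is_RInt_ig_moment_of_pullback u v I : 0 < u -> 0 < v ->
  is_RInt ig_moment_pullback
    (phi ig_sigma (u / (delta / gamma))) (phi ig_sigma (v / (delta / gamma))) I ->
  is_RInt ig_moment u v I.
Proof.
  intros Hu Hv HI.
  assert (Hcomp := is_RInt_comp ig_moment ig_node ig_node_deriv
                     (phi ig_sigma (u / (delta / gamma)))
                     (phi ig_sigma (v / (delta / gamma)))).
  rewrite !ig_node_phi in Hcomp by assumption.
  replace I with (RInt ig_moment u v).
  - apply (RInt_correct (V := R_CompleteNormedModule)), ex_RInt_continuous.
    intros t Ht; apply continuous_ig_moment.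
    generalize (Rmin_glb_lt _ _ _ Hu Hv); lra.
  - apply (is_RInt_unique (V := R_CompleteNormedModule)) in HI; rewrite <- HI.
    symmetry; apply (is_RInt_unique (V := R_CompleteNormedModule)), Hcomp.
    + intros; apply continuous_ig_moment, ig_node_pos.
    + intros; split; [apply is_derive_ig_node|apply continuous_ig_node_deriv].
Qed.

Lemma continuous_ig_moment_pullback z : continuous ig_moment_pullback z.
Proof.
  unfold ig_moment_pullback.
  apply (continuous_mult ig_node_deriv (fun z => ig_moment (ig_node z)));
    [apply continuous_ig_node_deriv|].
  apply (continuous_comp ig_node ig_moment);
    [|apply continuous_ig_moment, ig_node_pos].
  apply (ex_derive_continuous (V := R_NormedModule)); eexists; apply is_derive_ig_node.
Qed.

Lemma ig_moment_pullback_ge0 z : 0 <= ig_moment_pullback z.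
Proof.
  rewrite ig_moment_pullback_eq; apply Rlt_le, Rmult_lt_0_compat; [|apply ndens_pos].
  apply Rmult_lt_0_compat; [apply powerRZ_lt, ig_node_pos|].
  apply Rdiv_lt_0_compat; [lra|generalize (phi_inv_pos _ ig_sigma_pos z); lra].
Qed.

Lemma ig_moment_pullback_even_part k : (r = Z.of_nat k \/ r = 1 - Z.of_nat k)%Z ->
  forall z, ig_moment_pullback z + ig_moment_pullback (- z)
            = 2 * (powerRZ (delta / gamma) r * (sym_poly ig_sigma k z * ndens z)).
Proof.
  intros Hk z; rewrite !ig_moment_pullback_eq, ndens_opp.
  rewrite <- Rmult_plus_distr_r, (ig_weight_even_part k Hk); ring.
Qed.

Lemma is_RInt_gen_ig_moment_of_pullback J :
  is_RInt_gen ig_moment_pullback (Rbar_locally m_infty) (Rbar_locally p_infty) J ->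
  is_RInt_gen ig_moment (at_right 0) (Rbar_locally p_infty) J.
Proof.
  assert (Hc : 0 < delta / gamma) by (apply Rdiv_lt_0_compat; lra).
  apply is_RInt_gen_transport with
    (ya := fun uv => phi ig_sigma (fst uv / (delta / gamma)))
    (yb := fun uv => phi ig_sigma (snd uv / (delta / gamma))).
  - apply (filterlim_comp _ _ _ fst (fun u => phi ig_sigma (u / (delta / gamma))) _
             (at_right 0));
      [apply filterlim_fst|apply filterlim_phi_scaled_0; [apply ig_sigma_pos|exact Hc]].
  - apply (filterlim_comp _ _ _ snd (fun v => phi ig_sigma (v / (delta / gamma))) _
             (Rbar_locally p_infty));
      [apply filterlim_snd|
       apply filterlim_phi_scaled_p_infty; [apply ig_sigma_pos|exact Hc]].
  - apply (Filter_prod _ _ _ (fun u => 0 < u) (fun v => 0 < v)).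
    + exists (mkposreal 1 Rlt_0_1); intros u _ Hu; exact Hu.
    + exists 0; intros v Hv; exact Hv.
    + intros u v Hu Hv I; apply is_RInt_ig_moment_of_pullback; assumption.
Qed.

Lemma ig_quadrature_sum n z h k : gauss_hermite n z h ->
  (r = Z.of_nat k \/ r = 1 - Z.of_nat k)%Z ->
  fsum n (fun i => powerRZ (ig_node (z i)) r * (2 * h i / (1 + phi_inv ig_sigma (z i))))
  = powerRZ (delta / gamma) r * fsum n (fun i => h i * sym_poly ig_sigma k (z i)).
Proof.
  intros Hgh Hk.
  set (F := fun t => powerRZ (ig_node t) r * ig_weight t).
  transitivity (fsum n (fun i => h i * F (z i))).
  { apply fsum_ext; intros i _; unfold F, ig_weight.
    field; generalize (phi_inv_pos _ ig_sigma_pos (z i)); lra. }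
  transitivity (/ 2 * fsum n (fun i => h i * F (z i) + h i * F (- z i)));
    [rewrite fsum_add, <- (gauss_hermite_sum_opp n z h Hgh F); field|].
  rewrite <- !fsum_scal; apply fsum_ext; intros i _; unfold F.
  rewrite <- Rmult_plus_distr_l, (ig_weight_even_part k Hk); field.
Qed.

End InverseGaussian.

Theorem theorem1 (gamma delta : R) (n : nat) (z h : nat -> R) :
  0 < gamma -> 0 < delta -> (1 <= n)%nat ->
  gauss_hermite n z h ->
  let sigma := sqrt (gamma * delta) in
  let x := fun k => delta / gamma * phi_inv sigma (z k) in
  let w := fun k => 2 * h k / (1 + phi_inv sigma (z k)) in
  forall r : Z, (1 - Z.of_nat n <= r <= Z.of_nat n)%Z ->
    is_RInt_gen (fun t => powerRZ t r * f_IG gamma delta t)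
      (at_right 0) (Rbar_locally p_infty)
      (fsum n (fun k => powerRZ (x k) r * w k)).
Proof.
  (* [1 <= n] is implied by the range of [r] being nonempty. *)
  intros Hg Hd _ Hgh sigma x w r Hr.
  destruct (exponent_cases n r Hr) as [k [Hk Hrk]].
  change (fsum n (fun k => powerRZ (x k) r * w k)) with
    (fsum n (fun i => powerRZ (ig_node gamma delta (z i)) r
                      * (2 * h i / (1 + phi_inv (ig_sigma gamma delta) (z i))))).
  rewrite (ig_quadrature_sum gamma delta Hg Hd r n z h k Hgh Hrk).
  apply (is_RInt_gen_ig_moment_of_pullback gamma delta Hg Hd r).
  apply (is_RInt_gen_of_even_part _ (fun t => powerRZ (delta / gamma) r
                                       * (sym_poly (ig_sigma gamma delta) k t * ndens t))).
  - intros a b; apply (ex_RInt_continuous (V := R_CompleteNormedModule)); intros.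
    apply continuous_ig_moment_pullback; assumption.
  - intros t; apply ig_moment_pullback_ge0; assumption.
  - apply ig_moment_pullback_even_part; assumption.
  - apply (is_RInt_gen_scal (V := R_NormedModule) _ (powerRZ (delta / gamma) r)).
    apply gauss_hermite_exact; [exact Hgh|].
    destruct k as [|k]; [lia|apply (is_poly_le (2 * k + 1)); [lia|apply is_poly_sym_poly]].
Qed.
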